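(* Let $\mathbf D_0\in\mathcal D$. For any $\mathbf W\in\mathcal W_{\mathbf D_0}$, $\mathbf v\in\mathcal S^p$, $t\ge0$ and $J\subseteq\{1,\dots,p\}$, writing $\mathbf D(t)=\mathbf D(\mathbf W,\mathbf v,t)$, $$|||[\mathbf D(t)-\mathbf D_0]_J|||_2^2\le\|[\mathbf D(t)-\mathbf D_0]_J\|_F^2\le t^2\|\mathbf v_J\|_2^2,$$ $$|||(\mathbf I-\mathbf P_J(t))[\mathbf D_0]_J|||_2^2\le\|(\mathbf I-\mathbf P_J(t))[\mathbf D_0]_J\|_F^2\le t^2\|\mathbf v_J\|_2^2.$$
   Context: $\mathcal D$: real $m\times p$ matrices with unit $\ell_2$-norm columns; $\mathcal S^p$: unit sphere of $\mathbb R^p$; $\mathcal W_{\mathbf D_0}=\{\mathbf W:\mathrm{diag}(\mathbf W^\top\mathbf D_0)=\mathbf 0,\mathrm{diag}(\mathbf W^\top\mathbf W)=\mathbf 1\}$; $\mathbf D(\mathbf W,\mathbf v,t)=\mathbf D_0\mathrm{Diag}[\cos(\mathbf vt)]+\mathbf W\mathrm{Diag}[\sin(\mathbf vt)]$. For a matrix $\mathbf M$, $\mathbf M_J$ is the submatrix of columns indexed by $J$, and $\mathbf v_J$ the subvector. $\mathbf P_J(t)\in\mathbb R^{m\times m}$ is the orthogonal projector onto the span of the columns of $[\mathbf D(t)]_J$. $|||\cdot|||_2$ spectral norm. *)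

From HB Require Import structures.
From mathcomp Require Import all_boot all_order all_algebra.
From mathcomp Require Import all_classical all_reals all_analysis.
Set Implicit Arguments. Unset Strict Implicit. Unset Printing Implicit Defensive.
Import Order.TTheory GRing.Theory Num.Theory.
Local Open Scope ring_scope.
Local Open Scope classical_set_scope.

Section Defs.
Variable R : realType.

Definition vnorm n (x : 'cV[R]_n) : R := Num.sqrt (\sum_i x i 0 ^+ 2).

Definition frob m n (A : 'M[R]_(m, n)) : R :=
  Num.sqrt (\sum_i \sum_j A i j ^+ 2).

Definition specnorm m n (A : 'M[R]_(m, n)) : R :=
  sup [set vnorm (A *m x) | x in [set x : 'cV[R]_n | vnorm x <= 1]].

(* Columns of M indexed by J (in increasing order) *)
Definition colsJ m p (J : {set 'I_p}) (M : 'M[R]_(m, p)) : 'M[R]_(m, #|J|) :=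
  colsub (fun k : 'I_#|J| => enum_val k) M.

Definition vecJ p (J : {set 'I_p}) (v : 'cV[R]_p) : 'cV[R]_#|J| :=
  rowsub (fun k : 'I_#|J| => enum_val k) v.

Definition unit_cols m p (D : 'M[R]_(m, p)) : Prop :=
  forall j, \sum_i D i j ^+ 2 = 1.

Definition W_set m p (D0 W : 'M[R]_(m, p)) : Prop :=
  (forall j, \sum_i W i j * D0 i j = 0) /\ (forall j, \sum_i W i j ^+ 2 = 1).

Definition Dcurve m p (D0 W : 'M[R]_(m, p)) (v : 'cV[R]_p) (t : R) : 'M[R]_(m, p) :=
  D0 *m diag_mx (\row_j cos (v j 0 * t)) + W *m diag_mx (\row_j sin (v j 0 * t)).

(* P is the orthogonal projector onto the span of the columns of A:
   symmetric, idempotent, with range equal to the column space of A. *)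
Definition is_orth_proj m k (P : 'M[R]_m) (A : 'M[R]_(m, k)) : Prop :=
  P^T = P /\ P *m P = P /\ (P == A^T)%MS.

End Defs.

(* Column j of D(t) - D0 has squared length
   (cos(v_j t) - 1)^2 + sin(v_j t)^2 = 2 (1 - cos(v_j t)) <= (v_j t)^2,
   because the columns of D0 and W are orthonormal pairs; summing over J gives
   the Frobenius bound.  Since (I - P_J(t)) kills [D(t)]_J and is an orthogonal
   projector, (I - P_J(t)) [D0]_J = (I - P_J(t)) [D0 - D(t)]_J has no larger
   Frobenius norm.  The spectral norm is below the Frobenius norm by
   Cauchy-Schwarz. *)

From HB Require Import structures.
From mathcomp Require Import all_boot all_order all_algebra.
From mathcomp Require Import all_classical all_reals all_analysis.
From mathcomp Require Import ring lra.
Set Implicit Arguments. Unset Strict Implicit.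
Import Order.TTheory GRing.Theory Num.Theory.
Local Open Scope ring_scope.

Section TrigBounds.
Variable R : realType.
Local Open Scope classical_set_scope.

Lemma sin_le_id (x : R) : 0 <= x -> sin x <= x.
Proof.
move=> x0; case: (ltgtP 0 x) x0 => // [xp _|<- _]; last by rewrite sin0.
have der (y : R) : y \in `]0, x[%R -> is_derive y 1 (fun z : R => z - sin z) (1 - cos y).
  by move=> _; apply: is_deriveB.
have ct : {within `[0, x], continuous (fun z : R => z - sin z)}.
  apply: continuous_subspaceT => z; apply: continuousB => //; exact: continuous_sin.
have [c _ E] := MVT xp der ct.
rewrite -subr_ge0; move: E; rewrite sin0 !subr0 => ->.
by rewrite mulr_ge0 // ?subr_ge0 ?cos_le1 // ltW.
Qed.

Lemma one_sub_cos_le_nneg (x : R) : 0 <= x -> 2 * (1 - cos x) <= x ^+ 2.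
Proof.
move=> x0; case: (ltgtP 0 x) x0 => // [xp _|<- _]; last first.
  by rewrite cos0 subrr mulr0 expr0n.
have der (y : R) : is_derive y 1 (fun z : R => z * z + 2 * cos z) (2 * (y - sin y)).
  apply: is_derive_eq.
  change (y * 1 + y * 1 + 2 * - sin y = 2 * (y - sin y)); lra.
have ct : {within `[0, x], continuous (fun z : R => z * z + 2 * cos z)}.
  by apply: derivable_within_continuous => y _; case: (der y).
have [c cI E] := MVT xp (fun y _ => der y) ct.
move: E; rewrite cos0 mul0r add0r mulr1 subr0 => E.
have : 0 <= 2 * (c - sin c) * x.
  apply: mulr_ge0; last exact: ltW.
  rewrite mulr_ge0 // subr_ge0 sin_le_id //.
  by move: cI; rewrite in_itv /= => /andP[/ltW].
rewrite -E; lra.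
Qed.

Lemma one_sub_cos_le (x : R) : 2 * (1 - cos x) <= x ^+ 2.
Proof.
have [|/ltW x0] := lerP 0 x; first exact: one_sub_cos_le_nneg.
by rewrite -cosN -sqrrN one_sub_cos_le_nneg // oppr_ge0.
Qed.

End TrigBounds.

Lemma sqr_sum_mul_le (R : realDomainType) n (a b : 'I_n -> R) :
  (\sum_i a i * b i) ^+ 2 <= (\sum_i a i ^+ 2) * (\sum_i b i ^+ 2).
Proof.
have sum_mul (c d : 'I_n -> R) :
    \sum_i \sum_j c i * d j = (\sum_i c i) * (\sum_i d i).
  by rewrite mulr_suml; apply: eq_bigr => i _; rewrite mulr_sumr.
have lagrange : \sum_i \sum_j (a i * b j - a j * b i) ^+ 2 =
    2 * ((\sum_i a i ^+ 2) * (\sum_i b i ^+ 2) - (\sum_i a i * b i) ^+ 2).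
  transitivity (\sum_i \sum_j a i ^+ 2 * b j ^+ 2
      + \sum_i \sum_j b i ^+ 2 * a j ^+ 2
      - 2 * \sum_i \sum_j (a i * b i) * (a j * b j)).
    rewrite mulr_sumr -big_split -sumrB /=; apply: eq_bigr => i _.
    by rewrite mulr_sumr -big_split -sumrB /=; apply: eq_bigr => j _; ring.
  rewrite !sum_mul; ring.
have : 0 <= \sum_i \sum_j (a i * b j - a j * b i) ^+ 2.
  by apply: sumr_ge0 => i _; apply: sumr_ge0 => j _; apply: sqr_ge0.
rewrite lagrange; lra.
Qed.

Section MatrixNorms.
Variable R : realType.
Local Open Scope classical_set_scope.

Definition sqsum m n (M : 'M[R]_(m, n)) : R := \sum_i \sum_j M i j ^+ 2.

Lemma sqsum_ge0 m n (M : 'M[R]_(m, n)) : 0 <= sqsum M.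
Proof. by apply: sumr_ge0 => i _; apply: sumr_ge0 => j _; apply: sqr_ge0. Qed.

Lemma sqsumN m n (M : 'M[R]_(m, n)) : sqsum (- M) = sqsum M.
Proof. by apply: eq_bigr => i _; apply: eq_bigr => j _; rewrite mxE sqrrN. Qed.

Lemma sqsum_tr m n (M : 'M[R]_(m, n)) : sqsum M = \tr (M^T *m M).
Proof.
rewrite /sqsum /mxtrace exchange_big; apply: eq_bigr => j _.
by rewrite mxE; apply: eq_bigr => i _; rewrite mxE expr2.
Qed.

Lemma frob_sqr m n (M : 'M[R]_(m, n)) : frob M ^+ 2 = sqsum M.
Proof. by rewrite /frob sqr_sqrtr // sqsum_ge0. Qed.

Lemma vnorm_mulmx_le m n (A : 'M[R]_(m, n)) (x : 'cV[R]_n) :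
  vnorm (A *m x) <= frob A * vnorm x.
Proof.
rewrite /vnorm /frob -sqrtrM ?sqsum_ge0 // ler_sqrt; last first.
  by rewrite mulr_ge0 ?sqsum_ge0 // sumr_ge0 // => i _; apply: sqr_ge0.
rewrite mulr_suml; apply: ler_sum => i _; rewrite mxE.
exact: (sqr_sum_mul_le (fun j => A i j) (fun j => x j 0)).
Qed.

Lemma vnorm0 n : vnorm (0 : 'cV[R]_n) = 0.
Proof.
by rewrite /vnorm big1 ?sqrtr0 // => i _; rewrite mxE expr0n.
Qed.

Lemma specnorm_le_frob m n (A : 'M[R]_(m, n)) : 0 <= specnorm A <= frob A.
Proof.
set S := [set vnorm (A *m x) | x in [set x : 'cV[R]_n | vnorm x <= 1]].
have S_ub : ubound S (frob A).
  move=> _ [x /= x_le1 <-]; apply: le_trans (vnorm_mulmx_le A x) _.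
  by rewrite -[leRHS]mulr1 ler_wpM2l // sqrtr_ge0.
have S0 : S 0 by exists 0; rewrite /= ?mulmx0 vnorm0.
apply/andP; split; first by apply: (ub_le_sup _ S0); exists (frob A).
by apply: ge_sup => //; exists 0.
Qed.

Lemma sqr_specnorm_le_frob m n (A : 'M[R]_(m, n)) :
  specnorm A ^+ 2 <= frob A ^+ 2.
Proof.
have /andP[spec_ge0 spec_le] := specnorm_le_frob A.
by rewrite ler_sqr ?nnegrE ?sqrtr_ge0.
Qed.

Lemma sqsum_proj_compl_le m k (P : 'M[R]_m) (B : 'M[R]_(m, k)) :
  P^T = P -> P *m P = P -> sqsum ((1%:M - P) *m B) <= sqsum B.
Proof.
move=> PT PP; set Q := 1%:M - P.
have QT : Q^T = Q by rewrite /Q linearB /= trmx1 PT.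
have QQ : Q *m Q = Q by rewrite /Q mulmxBl mul1mx mulmxBr mulmx1 PP subrr subr0.
have pythagoras : sqsum B = sqsum (Q *m B) + sqsum (P *m B).
  rewrite !sqsum_tr !trmx_mul QT PT -!mulmxA (mulmxA Q) QQ (mulmxA P) PP.
  by rewrite -mxtraceD -mulmxDr -mulmxDl /Q subrK mul1mx.
by rewrite pythagoras lerDl sqsum_ge0.
Qed.

Lemma orth_proj_compl_mulmx m k (P : 'M[R]_m) (A : 'M[R]_(m, k)) :
  is_orth_proj P A -> (1%:M - P) *m A = 0.
Proof.
move=> [PT [PP /eqmxP PA]].
have : (A^T <= P)%MS by rewrite PA.
case/submxP => X AT_E.
have -> : A = P *m X^T by rewrite -[A]trmxK AT_E trmx_mul PT.
by rewrite mulmxBl mul1mx mulmxA PP subrr.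
Qed.

End MatrixNorms.

Section Curve.
Variables (R : realType) (m p : nat) (D0 W : 'M[R]_(m, p)) (v : 'cV[R]_p) (t : R).
Hypotheses (D0_unit : unit_cols D0) (W_D0 : W_set D0 W).

Lemma Dcurve_sub_col_sqsum j :
  \sum_i (Dcurve D0 W v t i j - D0 i j) ^+ 2 = 2 * (1 - cos (v j 0 * t)).
Proof.
have [W_orth W_unit] := W_D0.
set c := cos (v j 0 * t); set s := sin (v j 0 * t).
transitivity ((c - 1) ^+ 2 * \sum_i D0 i j ^+ 2
    + 2 * (c - 1) * s * \sum_i W i j * D0 i j + s ^+ 2 * \sum_i W i j ^+ 2).
  rewrite !mulr_sumr -!big_split /=; apply: eq_bigr => i _.
  rewrite /Dcurve mxE !mul_mx_diag !mxE -/c -/s; ring.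
rewrite D0_unit W_orth W_unit; have := cos2Dsin2 (v j 0 * t); rewrite -/c -/s; lra.
Qed.

Lemma sqsum_colsJ_Dcurve_sub_le (J : {set 'I_p}) :
  sqsum (colsJ J (Dcurve D0 W v t - D0)) <= t ^+ 2 * vnorm (vecJ J v) ^+ 2.
Proof.
rewrite /sqsum exchange_big /vnorm sqr_sqrtr; last first.
  by apply: sumr_ge0 => i _; apply: sqr_ge0.
rewrite mulr_sumr; apply: ler_sum => k _.
rewrite (eq_bigr (fun i => (Dcurve D0 W v t i (enum_val k) - D0 i (enum_val k)) ^+ 2));
  last by move=> i _; rewrite /colsJ !mxE.
by rewrite Dcurve_sub_col_sqsum /vecJ !mxE -exprMn [t * _]mulrC one_sub_cos_le.
Qed.

End Curve.

Theorem lemma4 (R : realType) (m p : nat) (D0 W : 'M[R]_(m, p)) (v : 'cV[R]_p)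
  (t : R) (J : {set 'I_p}) (P : 'M[R]_m) :
  unit_cols D0 -> W_set D0 W -> vnorm v = 1 -> 0 <= t ->
  is_orth_proj P (colsJ J (Dcurve D0 W v t)) ->
  [/\ specnorm (colsJ J (Dcurve D0 W v t - D0)) ^+ 2
        <= frob (colsJ J (Dcurve D0 W v t - D0)) ^+ 2,
      frob (colsJ J (Dcurve D0 W v t - D0)) ^+ 2 <= t ^+ 2 * vnorm (vecJ J v) ^+ 2,
      specnorm ((1%:M - P) *m colsJ J D0) ^+ 2
        <= frob ((1%:M - P) *m colsJ J D0) ^+ 2
    & frob ((1%:M - P) *m colsJ J D0) ^+ 2 <= t ^+ 2 * vnorm (vecJ J v) ^+ 2].
Proof.
(* The bounds hold for every v and t; [vnorm v = 1] and [0 <= t] are unused. *)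
move=> D0_unit W_D0 _ _ P_proj; have [PT [PP _]] := P_proj.
set Dt := Dcurve D0 W v t.
have dist_le := sqsum_colsJ_Dcurve_sub_le v t D0_unit W_D0 J.
have proj_D0 : (1%:M - P) *m colsJ J D0 = (1%:M - P) *m - colsJ J (Dt - D0).
  by rewrite /colsJ linearB opprB mulmxBr (orth_proj_compl_mulmx P_proj) subr0.
split; rewrite ?sqr_specnorm_le_frob // frob_sqr //.
rewrite proj_D0; apply: le_trans (sqsum_proj_compl_le _ PT PP) _.
by rewrite sqsumN.
Qed.
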